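(* For every hypothesis class $\mathcal{H}\subseteq\{0,1\}^{\mathcal{X}}$, $\mathtt{LD}(\mathcal{H})\le\mathtt{CD}(\mathcal{H})$.
   Context: A dataset of size $m$ is $S=((x_1,y_1),\dots,(x_m,y_m))\in(\mathcal{X}\times\{0,1\})^m$; it is $\mathcal{H}$-realizable if some $h\in\mathcal{H}$ satisfies $h(x_i)=y_i$ for all $i$. $G_m(\mathcal{H})$ is the graph on realizable datasets of size $m$ with $S,S'$ adjacent iff there is $x$ with $(x,0)$ appearing in $S$ and $(x,1)$ appearing in $S'$; $\omega_m$ is its clique number; $\mathtt{CD}(\mathcal{H})=\sup\{m:\omega_m=2^m\}\in\mathbb{N}\cup\{\infty\}$. A mistake tree is a complete binary tree whose internal nodes are labeled by points of $\mathcal{X}$, each internal node having one outgoing edge labeled $0$ and one labeled $1$; a root-to-leaf path yields the sequence $(x_1,y_1),\dots,(x_d,y_d)$ of node labels and edge labels. $\mathcal{H}$ shatters the tree if every root-to-leaf path is realizable by $\mathcal{H}$. $\mathtt{LD}(\mathcal{H})$ is the largest $d$ such that a complete mistake tree of depth $d$ is shattered by $\mathcal{H}$ ($\infty$ if arbitrarily deep ones exist). *)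

From HB Require Import structures.
From mathcomp Require Import all_boot all_order all_algebra.
From mathcomp Require Import classical_sets boolp reals constructive_ereal ereal.
From mathcomp Require Import Rstruct.
Set Implicit Arguments. Unset Strict Implicit. Unset Printing Implicit Defensive.
Import Order.TTheory GRing.Theory Num.Theory.
Local Open Scope classical_set_scope.
Local Open Scope ring_scope.

(* Extended values (sups of sets of naturals, with sup of the empty set = -oo
   and unbounded sets having sup +oo) live in \bar R, R = Stdlib reals. *)
Notation ER := (\bar Rdefinitions.R).
Definition natE (n : nat) : ER := (n%:R)%:E.
Definition esupN (A : set nat) : ER := ereal_sup [set natE n | n in A].

Section LearningDims.
Variable X : Type.
Implicit Type H : set (X -> bool).

Definition realizable H (S : seq (X * bool)) : Prop :=
  exists2 h, H h & forall xy, List.In xy S -> h xy.1 = xy.2.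

Definition dataset (m : nat) := m.-tuple (X * bool).

Definition adjacent m (S S' : dataset m) : Prop :=
  exists x, (List.In (x, false) (val S) /\ List.In (x, true) (val S')) \/
            (List.In (x, true) (val S) /\ List.In (x, false) (val S')).

Definition is_clique H m k (f : 'I_k -> dataset m) : Prop :=
  [/\ injective f, (forall i, realizable H (val (f i)))
    & (forall i j, i != j -> adjacent (f i) (f j))].

Definition omega H (m : nat) : ER :=
  esupN [set k | exists f : 'I_k -> dataset m, is_clique H f].

Definition CD H : ER := esupN [set m | omega H m = natE (2 ^ m)].

(* mistake trees: internal nodes labelled by points; left subtree = edge 0,
   right subtree = edge 1 *)
Inductive mtree : Type :=
| Leaf : mtree
| Node : X -> mtree -> mtree -> mtree.

Fixpoint complete (d : nat) (t : mtree) : Prop :=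
  match d, t with
  | 0, Leaf => True
  | d'.+1, Node _ l r => complete d' l /\ complete d' r
  | _, _ => False
  end.

Fixpoint branches (t : mtree) : seq (seq (X * bool)) :=
  match t with
  | Leaf => [:: [::]]
  | Node x l r => map (cons (x, false)) (branches l) ++ map (cons (x, true)) (branches r)
  end.

Definition shatters H (t : mtree) : Prop :=
  forall p, List.In p (branches t) -> realizable H p.

Definition LD H : ER := esupN [set d | exists t, complete d t /\ shatters H t].

End LearningDims.

From mathcomp Require Import all_boot all_order all_algebra.
From mathcomp Require Import classical_sets boolp reals constructive_ereal ereal.
From mathcomp Require Import Rstruct.
From mathcomp Require Import zify.
Set Implicit Arguments. Unset Strict Implicit. Unset Printing Implicit Defensive.
Import Order.TTheory GRing.Theory Num.Theory.

(* It suffices to show omega_d(H) = 2^d whenever H shatters a complete mistake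
   tree of depth d, since then every depth counted in LD(H) is counted in CD(H).
   - Lower bound: the 2^d root-to-leaf branches of such a tree are datasets of
     size d, realizable since the tree is shattered, and any two of them
     disagree on the label of the point where they split: a clique.
   - Upper bound (a Kraft-type inequality): if S_1, ..., S_k are consistent
     samples of size at most M that pairwise disagree on some point, then
     sum_i 2^(M - |S_i|) <= 2^M; for datasets of size m this gives k <= 2^m.
     It is proved by induction on the total size of the samples: fixing a point
     x and a label c, the samples compatible with x |-> c, with x erased, again
     form such a family, and each sample has at least twice its weight in the
     two conditioned families together. *)

Lemma InP (T : eqType) (p : T) (s : seq T) : List.In p s <-> p \in s.
Proof.
elim: s => [|q s IH] /=; first by split.
rewrite inE; split.
  by case=> [->|/IH ->]; rewrite ?eqxx ?orbT.
by case/orP=> [/eqP ->|/IH]; [left|right].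
Qed.

Lemma pairwise_nth (T : Type) (r : rel T) (x0 : T) (s : seq T) (i j : nat) :
  symmetric r -> pairwise r s -> i < size s -> j < size s -> i != j ->
  r (nth x0 s i) (nth x0 s j).
Proof.
move=> r_sym /(pairwiseP x0) r_s si sj; case: ltngtP => // [ij|ji] _.
  exact: r_s.
by rewrite r_sym; apply: r_s.
Qed.

Section Samples.
Variable Y : eqType.
Local Notation sample := (seq (Y * bool)).

Definition conflict (S T : sample) : bool :=
  has (fun p => (p.1, ~~ p.2) \in T) S.

Definition consistent (S : sample) : bool := ~~ conflict S S.

Definition forget (x : Y) (S : sample) : sample :=
  seq.filter (fun p => p.1 != x) S.

Definition condition (x : Y) (c : bool) (F : seq sample) : seq sample :=
  [seq forget x s | s <- F & (x, ~~ c) \notin s].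

Definition weight (M : nat) (S : sample) : nat := 2 ^ (M - size S).

Lemma conflict_sub S S' T T' : {subset S <= S'} -> {subset T <= T'} ->
  conflict S T -> conflict S' T'.
Proof.
move=> sS sT /hasP [p pS pT]; apply/hasP; exists p; [exact: sS | exact: sT].
Qed.

Lemma conflictC S T : conflict S T = conflict T S.
Proof.
by apply/hasP/hasP => -[[y b] pS pT]; exists (y, ~~ b); rewrite //= negbK.
Qed.

Lemma conflict_cons a S T : conflict S T -> conflict (a :: S) (a :: T).
Proof. by apply: conflict_sub => p pS; rewrite inE pS orbT. Qed.

Lemma forget_sub x S : {subset forget x S <= S}.
Proof. by move=> p; rewrite mem_filter => /andP []. Qed.

(* Erasing x preserves a conflict as long as neither sample uses the label ~~ c
   on x: the conflict cannot then be located at x. *)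
Lemma conflict_forget x c S T : (x, ~~ c) \notin S -> (x, ~~ c) \notin T ->
  conflict S T -> conflict (forget x S) (forget x T).
Proof.
move=> nS nT /hasP [[y b] pS pT]; apply/hasP; exists (y, b);
  rewrite mem_filter /= ?pS ?pT andbT; apply/eqP=> yx; subst y;
  by case: b c pS pT nS nT => [] [] /= pS pT; rewrite ?pS ?pT.
Qed.

Lemma size_forget x S : size (forget x S) <= size S.
Proof. by rewrite size_filter count_size. Qed.

Lemma size_forget_lt x c S : (x, c) \in S -> size (forget x S) < size S.
Proof.
move=> xS; rewrite size_filter -(count_predC (fun p => p.1 != x) S).
rewrite -{1}[count _ _]addn0 ltn_add2l -has_count.
by apply/hasP; exists (x, c) => //=; rewrite eqxx.
Qed.

Lemma big_condition x c F (g : sample -> nat) :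
  \sum_(S <- condition x c F) g S =
  \sum_(S <- F) (if (x, ~~ c) \notin S then g (forget x S) else 0).
Proof. by rewrite big_map big_filter big_mkcond. Qed.

Lemma condition_consistent x c F :
  all consistent F -> all consistent (condition x c F).
Proof.
move=> /allP consF; rewrite all_map; apply/allP => S; rewrite mem_filter.
case/andP=> _ /consF; apply: contra; apply: conflict_sub; exact: forget_sub.
Qed.

Lemma condition_pairwise x c F :
  pairwise conflict F -> pairwise conflict (condition x c F).
Proof.
move=> /(pairwise_filter (fun S => (x, ~~ c) \notin S)); rewrite pairwise_map.
apply: sub_in_pairwise (filter_all _ _) => S T nS nT.
exact: conflict_forget nS nT.
Qed.

Lemma condition_size_le M x c F : all (fun S => size S <= M) F ->
  all (fun S => size S <= M) (condition x c F).
Proof.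
move=> /allP szF; rewrite all_map; apply/allP => S; rewrite mem_filter.
by case/andP=> _ /szF; apply: leq_trans (size_forget _ _).
Qed.

(* Conditioning on a point of the first sample strictly decreases the total
   size of the family: that first sample either is dropped or loses x. *)
Lemma condition_total_size x b c R F :
  \sum_(S <- condition x c (((x, b) :: R) :: F)) size S <
  \sum_(S <- ((x, b) :: R) :: F) size S.
Proof.
rewrite big_condition !big_cons -addSn; apply: leq_add.
  by case: ifP => // _; apply: size_forget_lt (mem_head _ _).
apply: leq_sum => S _; case: ifP => // _; exact: size_forget.
Qed.

(* A consistent sample has at least twice its weight in the two conditioned
   families: it survives in one of them with a point fewer (doubling its
   weight), or, if it does not mention x, in both with the same weight. *)
Lemma weight_split M x S : consistent S -> size S <= M ->
  weight M S + weight M S <=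
  (if (x, false) \notin S then weight M (forget x S) else 0) +
  (if (x, true) \notin S then weight M (forget x S) else 0).
Proof.
move=> consS szS; rewrite /weight.
have le_w : 2 ^ (M - size S) <= 2 ^ (M - size (forget x S)).
  apply: leq_pexp2l => //; move: szS (size_forget x S).
  by move: (size S) (size (forget x S)) => n n'; lia.
have lt_w c : (x, c) \in S ->
    2 ^ (M - size S) + 2 ^ (M - size S) <= 2 ^ (M - size (forget x S)).
  move=> /size_forget_lt lt_sz; rewrite addnn -mul2n -expnS.
  apply: leq_pexp2l => //; move: szS lt_sz.
  by move: (size S) (size (forget x S)) => n n'; lia.
have not_both : ~~ (((x, false) \in S) && ((x, true) \in S)).
  by apply: contra consS => /andP [xf xt]; apply/hasP; exists (x, false).
case: (boolP ((x, false) \in S)) => xf; case: (boolP ((x, true) \in S)) => xt.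
- by rewrite xf xt in not_both.
- by rewrite /= add0n; exact: lt_w xf.
- by rewrite /= addn0; exact: lt_w xt.
- by rewrite /=; apply: leq_add.
Qed.

Lemma conflict_family_weight M F :
  all consistent F -> pairwise conflict F -> all (fun S => size S <= M) F ->
  \sum_(S <- F) weight M S <= 2 ^ M.
Proof.
have [n] := ubnP (\sum_(S <- F) size S); elim: n F => // n IH.
case=> [|[|[x b] R] F] sizeF consF pwF szF; first by rewrite big_nil.
  (* the empty sample conflicts with nothing, so it stands alone *)
  have -> : F = [::].
    by case: F pwF {sizeF consF szF} => [|T F] //= /andP [/andP []].
  by rewrite big_seq1 /weight subn0.
set G := ((x, b) :: R) :: F.
have IHc c : \sum_(S <- condition x c G) weight M S <= 2 ^ M.
  apply: IH; rewrite ?condition_consistent ?condition_pairwise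
    ?condition_size_le //.
  exact: leq_trans (condition_total_size _ _ _ _ _) _.
rewrite -leq_double -!addnn -big_split /=.
apply: leq_trans (leq_add (IHc true) (IHc false)).
rewrite !big_condition -big_split big_seq [X in _ <= X]big_seq /=.
apply: leq_sum => S SG.
by apply: weight_split; [exact: (allP consF S SG) | exact: (allP szF S SG)].
Qed.

(* Any two distinct branches of a mistake tree conflict at the node where they
   part ways. *)
Lemma branches_conflict (t : mtree Y) : pairwise conflict (branches t).
Proof.
elim: t => [|x l IHl r IHr] //=.
rewrite pairwise_cat !pairwise_map; apply/and3P; split.
- apply/allrelP => u v /mapP [p _ ->] /mapP [q _ ->].
  by apply/hasP; exists (x, false); rewrite ?mem_head //= mem_head.
- by apply: sub_pairwise IHl => p q; apply: conflict_cons.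
- by apply: sub_pairwise IHr => p q; apply: conflict_cons.
Qed.

Lemma size_branches d (t : mtree Y) : complete d t -> size (branches t) = 2 ^ d.
Proof.
elim: d t => [|d IH] [|x l r] //= [/IH sl /IH sr].
by rewrite size_cat !size_map sl sr expnS mul2n addnn.
Qed.

Lemma size_branch d (t : mtree Y) p :
  complete d t -> p \in branches t -> size p = d.
Proof.
elim: d t p => [|d IH] [|x l r] //= p; first by rewrite inE => _ /eqP ->.
by case=> cl cr; rewrite mem_cat => /orP [] /mapP [q qt ->] /=;
  rewrite (IH _ _ _ qt).
Qed.

End Samples.

Section Cliques.
Variable X : Type.
Variable H : set (X -> bool).
Local Notation point := {classic X}.

Lemma In_sample (p : point * bool) (s : seq (point * bool)) :
  List.In p s <-> p \in s.
Proof. exact: InP. Qed.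

Lemma realizable_consistent (S : seq (point * bool)) :
  realizable H S -> consistent S.
Proof.
move=> [h _ hS]; apply/negP => /hasP [[y b] pS pT].
move/In_sample/hS: pS => /= hyb; move/In_sample/hS: pT => /=.
by rewrite hyb; case: b {hyb}.
Qed.

Lemma adjacentP m (S T : dataset X m) :
  adjacent S T <-> conflict (val S : seq (point * bool)) (val T).
Proof.
split.
  move=> [z [[/In_sample zS /In_sample zT]|[/In_sample zS /In_sample zT]]].
    by apply/hasP; exists (z, false).
  by apply/hasP; exists (z, true).
move=> /hasP [[z b] zS zT]; exists z.
by case: b zS zT => /= /In_sample zS /In_sample zT; [right | left].
Qed.

Lemma clique_card_le k m (f : 'I_k -> dataset X m) :
  is_clique H f -> k <= 2 ^ m.
Proof.
move=> [_ f_real f_adj].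
pose F : seq (seq (point * bool)) := [seq val (f i) | i <- enum 'I_k].
have <- : \sum_(S <- F) weight m S = k.
  rewrite big_map (eq_bigr (fun=> 1)); last first.
    by move=> i _; rewrite /weight size_tuple subnn.
  by rewrite sum1_size size_enum_ord.
apply: conflict_family_weight; rewrite ?all_map.
- by apply/allP => i _; exact: realizable_consistent (f_real i).
- rewrite pairwise_map; apply: sub_pairwise (_ : pairwise [rel i j | i != j] _).
    by move=> i j /f_adj /adjacentP.
  by rewrite -uniq_pairwise enum_uniq.
- by apply/allP => i _ /=; rewrite size_tuple.
Qed.

Lemma omega_le m : (omega H m <= natE (2 ^ m))%E.
Proof.
apply: ge_ereal_sup => _ [k [f f_clique] <-].
by rewrite /natE lee_fin ler_nat; exact: clique_card_le f_clique.
Qed.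

Lemma shattered_tree_clique d (t : mtree X) : complete d t -> shatters H t ->
  exists f : 'I_(2 ^ d) -> dataset X d, is_clique H f.
Proof.
move=> ct sh; set B : seq (seq (point * bool)) := branches t.
have szB : size B = 2 ^ d by exact: size_branches.
have inB (i : 'I_(2 ^ d)) : nth [::] B i \in B by rewrite mem_nth // szB.
have realB (i : 'I_(2 ^ d)) : realizable H (nth [::] B i).
  by apply: sh; exact: (proj2 (InP _ _) (inB i)).
have conflictB (i j : 'I_(2 ^ d)) :
    i != j -> conflict (nth [::] B i) (nth [::] B j).
  move=> ij; apply: pairwise_nth; rewrite ?szB //; first exact: conflictC.
  exact: branches_conflict.
have szP (i : 'I_(2 ^ d)) : size (nth [::] B i) == d.
  by apply/eqP; exact: (@size_branch point d t _ ct (inB i)).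
exists (fun i => Tuple (szP i)); split.
- move=> i j /(congr1 val) /= eq_ij; apply/eqP; apply: contraT => ij.
  have := realizable_consistent (realB j).
  by rewrite /consistent -{1}eq_ij conflictB.
- exact: realB.
- move=> i j /conflictB cij.
  by apply/(adjacentP (Tuple (szP i)) (Tuple (szP j))).
Qed.

Lemma omega_shattered d (t : mtree X) : complete d t -> shatters H t ->
  omega H d = natE (2 ^ d).
Proof.
move=> ct sh; apply/eqP; rewrite eq_le omega_le /=.
apply: ereal_sup_ubound; exists (2 ^ d) => //.
exact: shattered_tree_clique ct sh.
Qed.

End Cliques.

Theorem mainTheorem9 (X : Type) (H : set (X -> bool)) : (LD H <= CD H)%E.
Proof.
apply: ereal_sup_le => _ [d [t [ct sh]] <-]; exists d => //.
exact: omega_shattered ct sh.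
Qed.
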